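(* For $n,k,f\geqslant 0$ let $\mathfrak{j}_{n,k,f}$ be the number of words $\omega$ of length $n$ over the alphabet $\{0,\dots,k-1\}$ avoiding both $010$ and $110$ with $\mathrm{forb}(\omega,\{010,110\})=f$ (the empty word has $\mathrm{forb}=0$), and let $\mathfrak{k}_{n,k}=\sum_{f}\mathfrak{j}_{n,k,f}$ be the number of words of length $n$ over $\{0,\dots,k-1\}$ avoiding $010$ and $110$. Then for all $n\geqslant1$ and $k,f\geqslant0$, $$\mathfrak{j}_{n,k,f}=\sum_{p=1}^{n}\sum_{i=0}^{f-1}\sum_{m=0}^{k-1}\mathfrak{j}_{p-1,m,i}\cdot\Bigl(\mathfrak{j}_{n-p,\,m-i,\,f-i-1}+\delta_{f,m+1}\sum_{\ell=0}^{n-p-1}\mathfrak{k}_{\ell,\,m-i}\Bigr).$$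
   Context: $\delta_{a,b}$ is the Kronecker delta. A word contains a pattern $p$ if some subsequence is order-isomorphic to $p$; otherwise it avoids $p$. Avoiding $010$: no $i<j<l$ with $\omega_i=\omega_l<\omega_j$. Avoiding $110$: no $i<j<l$ with $\omega_i=\omega_j>\omega_l$. For a nonempty sequence $\omega$ avoiding a set of patterns $P$, a value $v\in\{0,\dots,\max(\omega)\}$ is forbidden if $\omega$ followed by $M$ and then $v$ contains some pattern of $P$, where $M>\max(\omega)$; $\mathrm{forb}(\omega,P)$ is the number of forbidden values. *)

From mathcomp Require Import all_boot.
Set Implicit Arguments. Unset Strict Implicit. Unset Printing Implicit Defensive.

(* [s] is order-isomorphic to [p]: same length and same relative order of
   every pair of positions (comparing with < in both directions also
   determines equality). *)
Definition order_iso (s p : seq nat) : bool :=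
  (size s == size p) &&
  [forall i : 'I_(size s), forall j : 'I_(size s),
     (nth 0 s i < nth 0 s j) == (nth 0 p i < nth 0 p j)].

Definition contains (w p : seq nat) : bool :=
  [exists m : (size w).-tuple bool, order_iso (mask m w) p].

Definition avoids (P : seq (seq nat)) (w : seq nat) : bool :=
  all (fun p => ~~ contains w p) P.

Definition maxw (w : seq nat) : nat := \max_(x <- w) x.

Definition forb (w : seq nat) (P : seq (seq nat)) : nat :=
  if w is [::] then 0 else
  count (fun v => ~~ avoids P (w ++ [:: (maxw w).+1; v])) (iota 0 (maxw w).+1).

Definition pat010 : seq nat := [:: 0; 1; 0].
Definition pat110 : seq nat := [:: 1; 1; 0].
Definition P010_110 : seq (seq nat) := [:: pat010; pat110].

Definition jj (n k f : nat) : nat :=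
  #|[set w : n.-tuple 'I_k |
       avoids P010_110 (map val w) && (forb (map val w) P010_110 == f)]|.

Definition kk (n k : nat) : nat :=
  #|[set w : n.-tuple 'I_k | avoids P010_110 (map val w)]|.

Definition delta (a b : nat) : nat := (a == b).

From mathcomp Require Import all_boot zify.
Set Implicit Arguments. Unset Strict Implicit. Unset Printing Implicit Defensive.

(* A word avoids {010, 110} iff it has no subsequence a b a with a < b and no
   subsequence a a c with c < a (pattern_freeP).  The values forbidden after a
   word w are those occurring in w or lying below a letter occurring twice in
   w (forbidden, forbE).  A nonempty word is written uniquely as x ++ m :: z,
   where m is its maximum and x, of length p-1, precedes the first occurrence
   of m (sum_words_by_max).  If z stays below m, then w avoids iff x and z do
   and z only uses the m - forb x values allowed by x; relabelling these to
   {0, ..., m - forb x - 1} and using forb w = forb x + 1 + forb z gives the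
   j-term (count_below_max).  If z contains m, say z = z1 ++ m :: z2 at its
   first occurrence, avoidance forces z2 to be constant m and forb w = m+1,
   which gives the delta term summing k over the lengths of z1
   (count_with_max).  Grouping the prefixes x by i = forb x (sum_by_forb)
   yields the theorem. *)

Local Notation av := (avoids P010_110).
Local Notation nforb w := (forb w P010_110).
Local Notation below N w := (all (fun v => v < N) w).

Lemma subseq_catP (s x y : seq nat) :
  reflect (exists s1 s2, [/\ s = s1 ++ s2, subseq s1 x & subseq s2 y])
          (subseq s (x ++ y)).
Proof.
apply: (iffP idP) => [|[s1 [s2 [-> sub1 sub2]]]]; last exact: cat_subseq.
case/subseqP => m sz ->.
exists (mask (take (size x) m) x), (mask (drop (size x) m) y).
rewrite -mask_cat ?cat_take_drop ?mask_subseq //.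
by rewrite size_takel // sz size_cat leq_addr.
Qed.

Lemma containsP w p :
  reflect (exists2 s, subseq s w & order_iso s p) (contains w p).
Proof.
apply: (iffP existsP) => [[m iso]|[s /subseqP [m sz ->] iso]].
  by exists (mask m w); rewrite ?mask_subseq.
have sz' : size m == size w by apply/eqP.
by exists (Tuple sz').
Qed.

Lemma iso010 s : order_iso s pat010 <-> exists a b, s = [:: a; b; a] /\ a < b.
Proof.
split=> [/andP [sz /forallP iso]|[a [b [-> ab]]]].
  case: s sz iso => [|a [|b [|c [|d s]]]] // _ iso.
  have /eqP/= ab := forallP (iso (@Ordinal 3 0 isT)) (@Ordinal 3 1 isT).
  have /eqP/= ac := forallP (iso (@Ordinal 3 0 isT)) (@Ordinal 3 2 isT).
  have /eqP/= ca := forallP (iso (@Ordinal 3 2 isT)) (@Ordinal 3 0 isT).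
  by exists a, b; split; [have -> : c = a by lia | lia].
apply/andP; split=> //; apply/forallP => i; apply/forallP => j.
by case: i j => [[|[|[|i]]] Hi] [[|[|[|j]]] Hj] //=; apply/eqP; lia.
Qed.

Lemma iso110 s : order_iso s pat110 <-> exists a c, s = [:: a; a; c] /\ c < a.
Proof.
split=> [/andP [sz /forallP iso]|[a [c [-> ca]]]].
  case: s sz iso => [|a [|b [|c [|d s]]]] // _ iso.
  have /eqP/= ab := forallP (iso (@Ordinal 3 0 isT)) (@Ordinal 3 1 isT).
  have /eqP/= ba := forallP (iso (@Ordinal 3 1 isT)) (@Ordinal 3 0 isT).
  have /eqP/= ca := forallP (iso (@Ordinal 3 2 isT)) (@Ordinal 3 0 isT).
  by exists a, c; split; [have -> : b = a by lia | lia].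
apply/andP; split=> //; apply/forallP => i; apply/forallP => j.
by case: i j => [[|[|[|i]]] Hi] [[|[|[|j]]] Hj] //=; apply/eqP; lia.
Qed.

Definition pattern_free (w : seq nat) : Prop :=
  (forall a b, a < b -> ~~ subseq [:: a; b; a] w) /\
  (forall a c, c < a -> ~~ subseq [:: a; a; c] w).

Lemma pattern_freeP w : reflect (pattern_free w) (av w).
Proof.
rewrite /avoids /= andbT.
apply: (iffP andP) => [[/containsP no010 /containsP no110]|[no010 no110]].
  split=> [a b ab|a c ca]; apply/negP => sub.
    by apply: no010; exists [:: a; b; a] => //; apply/iso010; exists a, b.
  by apply: no110; exists [:: a; a; c] => //; apply/iso110; exists a, c.
split; apply/containsP => -[s sub].
  by case/iso010 => a [b [eq_s ab]]; move/negP: (no010 a b ab); rewrite -eq_s.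
by case/iso110 => a [c [eq_s ca]]; move/negP: (no110 a c ca); rewrite -eq_s.
Qed.

Lemma subseq3_cat (a b c : nat) x y : subseq [:: a; b; c] (x ++ y) ->
  [\/ subseq [:: a; b; c] x, subseq [:: a; b] x /\ c \in y,
      a \in x /\ subseq [:: b; c] y | subseq [:: a; b; c] y].
Proof.
case/subseq_catP => s1 [s2 [eq_s sub1 sub2]].
case: s1 eq_s sub1 sub2 => [|a1 [|b1 [|c1 [|d1 s1]]]] //=.
- by move=> <- _; apply: Or44.
- by case=> -> <- sub1 sub2; apply: Or43; rewrite -sub1seq.
- by case=> -> -> <- sub1 sub2; apply: Or42; rewrite -sub1seq.
- by case=> -> -> -> -> sub1 _; apply: Or41.
Qed.

Lemma subseq2_cat (a b : nat) x y : subseq [:: a; b] (x ++ y) ->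
  [\/ subseq [:: a; b] x, a \in x /\ b \in y | subseq [:: a; b] y].
Proof.
case/subseq_catP => s1 [s2 [eq_s sub1 sub2]].
case: s1 eq_s sub1 sub2 => [|a1 [|b1 [|c1 s1]]] //=.
- by move=> <- _; apply: Or33.
- by case=> -> <- sub1 sub2; apply: Or32; rewrite -!sub1seq.
- by case=> -> -> -> sub1 _; apply: Or31.
Qed.

Lemma subseq_consE (s : seq nat) m z : subseq s (m :: z) ->
  subseq s z \/ exists2 s', s = m :: s' & subseq s' z.
Proof.
case: s => [|a s] /=; first by rewrite sub0seq; left.
by case: eqP => [-> sub|_ sub]; [right; exists s | left].
Qed.

Lemma subseq2_mem (a b : nat) s : subseq [:: a; b] s -> a \in s /\ b \in s.
Proof. by move/mem_subseq => sub; split; apply: sub; rewrite !inE eqxx ?orbT. Qed.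

Lemma subseq3_mem (a b c : nat) s :
  subseq [:: a; b; c] s -> [/\ a \in s, b \in s & c \in s].
Proof. by move/mem_subseq => sub; split; apply: sub; rewrite !inE eqxx ?orbT. Qed.

Lemma pattern_free_subseq u w : subseq u w -> pattern_free w -> pattern_free u.
Proof.
move=> uw [no010 no110]; split=> a b ab; apply/negP => /subseq_trans/(_ uw).
  by apply/negP; apply: no010.
by apply/negP; apply: no110.
Qed.

Lemma av_catl x y : av (x ++ y) -> av x.
Proof. by move/pattern_freeP/(pattern_free_subseq (prefix_subseq x y))/pattern_freeP. Qed.

Lemma av_catr x y : av (x ++ y) -> av y.
Proof. by move/pattern_freeP/(pattern_free_subseq (suffix_subseq x y))/pattern_freeP. Qed.

(* [forbidden w v]: the value [v] occurs in [w] or lies below a letter that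
   occurs twice in [w].  These are exactly the values counted by forb (forbE). *)
Definition forbidden (w : seq nat) (v : nat) : bool :=
  (v \in w) || has (fun a => (v < a) && subseq [:: a; a] w) w.

Lemma forbiddenP w v :
  reflect (v \in w \/ exists2 a, v < a & subseq [:: a; a] w) (forbidden w v).
Proof.
apply: (iffP orP) => [[vw|/hasP [a _ /andP [va sq]]]|[vw|[a va sq]]].
- by left.
- by right; exists a.
- by left.
- by right; apply/hasP; exists a; [case: (subseq2_mem sq) | rewrite va].
Qed.

Lemma cat_max_disjoint m x z a : below m x -> all (fun v => ~~ forbidden x v) z ->
  a \in x -> a \in m :: z -> False.
Proof.
move=> /allP xm /allP zx ax; rewrite inE => /orP [/eqP am|az].
  by move: (xm a ax); rewrite am ltnn.
by move: (zx a az); rewrite /forbidden ax.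
Qed.

Lemma free_cat_max m x z : below m x -> below m z ->
  pattern_free x -> pattern_free z -> all (fun v => ~~ forbidden x v) z ->
  pattern_free (x ++ m :: z).
Proof.
move=> xm /allP zm [x010 x110] [z010 z110] zx.
have disj := cat_max_disjoint xm zx.
have drop_m a s : a \in s -> subseq (a :: s) (m :: z) -> subseq (a :: s) z.
  move=> as_ /subseq_consE [//|[s' [am es] sub]].
  by move: as_; rewrite es => /(mem_subseq sub)/zm; rewrite am ltnn.
split=> [a b ab|a c ca]; apply/negP => /subseq3_cat [].
- by apply/negP; apply: x010.
- by case=> /subseq2_mem [ax _] az; apply: disj az.
- by case=> ax /subseq2_mem [_ az]; apply: disj az.
- by move/(drop_m a); rewrite !inE eqxx orbT => /(_ isT); apply/negP; apply: z010.
- by apply/negP; apply: x110.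
- case=> sq; rewrite inE => /orP [/eqP cm|cz].
    by have [ax _] := subseq2_mem sq; move: (allP xm a ax); rewrite -cm; lia.
  by move: (allP zx c cz) => /forbiddenP []; right; exists a.
- by case=> ax /subseq2_mem [az _]; apply: disj az.
- by move/(drop_m a); rewrite !inE eqxx => /(_ isT); apply/negP; apply: z110.
Qed.

Lemma av_cat_max m x z : below m x -> below m z ->
  av (x ++ m :: z) = [&& av x, av z & all (fun v => ~~ forbidden x v) z].
Proof.
move=> xm zm; apply/idP/and3P => [w_av|[/pattern_freeP x_free /pattern_freeP z_free zx]].
  split; first exact: av_catl w_av.
    by apply: (@av_catr [:: m]); apply: av_catr w_av.
  have /pattern_freeP [w010 w110] := w_av.
  apply/allP => v vz; apply/negP => /forbiddenP [vx|[a va sq]].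
    move/negP: (w010 v m (allP zm v vz)); apply.
    by apply: (@cat_subseq _ [:: v] [:: m; v]); rewrite ?sub1seq //= eqxx sub1seq.
  move/negP: (w110 a v va); apply.
  by apply: (@cat_subseq _ [:: a; a] [:: v]); rewrite // sub1seq inE vz orbT.
by apply/pattern_freeP; apply: free_cat_max.
Qed.

Lemma av_max_tail m u z : below m.+1 u -> m \in u -> below m.+1 z ->
  av (u ++ m :: z) = av u && all (pred1 m) z.
Proof.
move=> /allP um mu /allP zm; apply/idP/andP => [w_av|[/pattern_freeP [u010 u110] /allP zmm]].
  split; first exact: av_catl w_av.
  apply/allP => v vz /=; apply/negPn/negP => vm.
  have /pattern_freeP [_ w110] := w_av.
  have v_lt : v < m by move: (zm v vz) vm; rewrite ltnS leq_eqVlt => /orP [->|].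
  move/negP: (w110 m v v_lt); apply.
  apply: (@cat_subseq _ [:: m] [:: m; v]); first by rewrite sub1seq.
  by rewrite /= eqxx sub1seq.
have tail_m v : v \in m :: z -> v = m.
  by rewrite inE => /orP [/eqP //|/zmm /eqP].
apply/pattern_freeP; split=> [a b ab|a c ca]; apply/negP => /subseq3_cat [].
- by apply/negP; apply: u010.
- by case=> /subseq2_mem [_ bu] /tail_m am; move: (um b bu) ab; rewrite am; lia.
- by case=> _ /subseq2_mem [/tail_m bm /tail_m am]; move: ab; rewrite am bm ltnn.
- by case/subseq3_mem => /tail_m am /tail_m bm _; move: ab; rewrite am bm ltnn.
- by apply/negP; apply: u110.
- by case=> /subseq2_mem [au _] /tail_m cm; move: (um a au) ca; rewrite cm; lia.
- by case=> au /subseq2_mem [_ /tail_m cm]; move: (um a au) ca; rewrite cm; lia.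
- by case/subseq3_mem => /tail_m am _ /tail_m cm; move: ca; rewrite am cm ltnn.
Qed.

Lemma forbidden_below N w v : below N w -> forbidden w v -> v < N.
Proof.
by move=> /allP wN /forbiddenP [/wN //|[a va /subseq2_mem [/wN aN _]]]; apply: ltn_trans aN.
Qed.

(* forb counts the forbidden values; any bound [N] on the letters may be used
   for the range, since appending the maximum plus one and [v] creates a
   pattern exactly when [v] is forbidden (the case [z = [:: v]] of av_cat_max). *)
Lemma forbE N w : av w -> below N w -> nforb w = count (forbidden w) (iota 0 N).
Proof.
case: w => [|a w'] w_av wN; first by rewrite /= (@eq_count _ _ pred0) ?count_pred0.
set w := a :: w' in w_av wN *; set M := (maxw w).+1.
have wM : below M w by apply/allP => v vw; rewrite ltnS; apply: leq_bigmax_seq.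
have MN : M <= N.
  have : maxw w <= N.-1 by apply/bigmax_leqP_seq => v vw _; move: (allP wN v vw); lia.
  by move: (allP wN a (mem_head a w')); rewrite /M; lia.
have ext v : v < M -> av (w ++ [:: M; v]) = ~~ forbidden w v.
  move=> vM; have v_av : av [:: v].
    by apply/pattern_freeP; split=> *; apply/negP => /size_subseq.
  by rewrite (av_cat_max wM) ?w_av ?v_av /= ?andbT ?vM.
rewrite -(subnKC MN) iotaD count_cat add0n (@eq_in_count _ _ pred0 (iota M _)).
  rewrite count_pred0 addn0 /forb -/w -/M; apply: eq_in_count => v.
  by rewrite mem_iota add0n => /ext ->; rewrite negbK.
by move=> v; rewrite mem_iota => /andP [Mv _]; apply/negP => /(forbidden_below wM); lia.
Qed.

Lemma forb_le m x : av x -> below m x -> nforb x <= m.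
Proof. by move=> x_av xm; rewrite (forbE x_av xm) -{2}(size_iota 0 m) count_size. Qed.

Lemma square_cat_max m x z a : below m x -> below m z ->
  all (fun v => ~~ forbidden x v) z -> subseq [:: a; a] (x ++ m :: z) ->
  subseq [:: a; a] x \/ subseq [:: a; a] z.
Proof.
move=> xm /allP zm zx /subseq2_cat [sq|[ax az]|/subseq_consE [sq|[s [am <-] sub]]].
- by left.
- by case: (cat_max_disjoint xm zx ax az).
- by right.
- by move: sub; rewrite sub1seq => /zm; rewrite am ltnn.
Qed.

Lemma forbidden_cat_max m x z v : below m x -> below m z ->
  all (fun v => ~~ forbidden x v) z ->
  forbidden (x ++ m :: z) v = [|| forbidden x v, v == m | forbidden z v].
Proof.
move=> xm zm zx; apply/forbiddenP/or3P.
  case=> [|[a va /(square_cat_max xm zm zx) [sq|sq]]].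
  - rewrite mem_cat inE => /or3P [vx|vm|vz]; [apply: Or31|apply: Or32|apply: Or33] => //.
      by apply/forbiddenP; left.
    by apply/forbiddenP; left.
  - by apply: Or31; apply/forbiddenP; right; exists a.
  - by apply: Or33; apply/forbiddenP; right; exists a.
have z_sub : subseq z (x ++ m :: z).
  by apply: subseq_trans (subseq_cons z m) (suffix_subseq x _).
case=> [/forbiddenP [vx|[a va sq]]|/eqP ->|/forbiddenP [vz|[a va sq]]].
- by left; rewrite mem_cat vx.
- by right; exists a => //; apply: subseq_trans sq (prefix_subseq x _).
- by left; rewrite mem_cat mem_head orbT.
- by left; apply: (mem_subseq z_sub).
- by right; exists a => //; apply: subseq_trans sq z_sub.
Qed.

Definition allowed (x : seq nat) (m : nat) : seq nat :=
  filter (fun v => ~~ forbidden x v) (iota 0 m).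

Lemma count_orb (a b : pred nat) s :
  count (fun v => a v || b v) s = count a s + count (predI b (fun v => ~~ a v)) s.
Proof. by elim: s => //= v s ->; case: (a v); case: (b v) => /=; lia. Qed.

Lemma below_cat_max m x z : below m x -> below m z -> below m.+1 (x ++ m :: z).
Proof.
have lt_S : subpred (fun v => v < m) (fun v => v < m.+1) by move=> v /ltnW.
by move=> xm zm; rewrite all_cat /= ltnSn (sub_all lt_S xm) (sub_all lt_S zm).
Qed.

Lemma forb_cat_max m x z : below m x -> below m z -> av (x ++ m :: z) ->
  nforb (x ++ m :: z) = nforb x + count (forbidden z) (allowed x m) + 1.
Proof.
move=> xm zm w_av; have := w_av; rewrite (av_cat_max xm zm) => /and3P [x_av _ zx].
rewrite (forbE w_av (below_cat_max xm zm)) (forbE x_av xm) count_filter.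
rewrite -addn1 iotaD count_cat add0n /= forbidden_cat_max // eqxx orbT addn0.
congr (_ + _); rewrite -count_orb; apply: eq_in_count => v.
by rewrite mem_iota add0n /= forbidden_cat_max // => /ltn_eqF ->.
Qed.

Lemma forb_square_max m w : av w -> below m.+1 w -> subseq [:: m; m] w ->
  nforb w = m.+1.
Proof.
move=> w_av wm sq; rewrite (forbE w_av wm) -[RHS](size_iota 0) -count_predT.
apply: eq_in_count => v; rewrite mem_iota leq0n add0n ltnS leq_eqVlt => /orP [/eqP ->|vm].
  by apply/forbiddenP; left; case: (subseq2_mem sq).
by apply/forbiddenP; right; exists m.
Qed.

Lemma subseq_map_inj (g : nat -> nat) : injective g ->
  forall s1 s2, subseq (map g s1) (map g s2) = subseq s1 s2.
Proof.
move=> g_inj s1 s2; apply/idP/idP => [|/(map_subseq g) //].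
case/subseqP => m sz eq_s; rewrite -map_mask in eq_s.
by apply/subseqP; exists m; [rewrite sz size_map | apply: inj_map eq_s].
Qed.

Section Relabel.
Variable g : nat -> nat.
Hypothesis g_incr : {homo g : x y / x < y}.

Let g_mono : {mono g : x y / x < y}.
Proof. exact: leqW_mono (leq_mono g_incr). Qed.

Let g_inj : injective g.
Proof. exact: incn_inj (leq_mono g_incr). Qed.

Lemma av_map w : av (map g w) = av w.
Proof.
apply/pattern_freeP/pattern_freeP => -[no010 no110].
  split=> [a b ab|a c ca]; apply/negP => /(map_subseq g).
    by apply/negP; apply: no010; rewrite g_mono.
  by apply/negP; apply: no110; rewrite g_mono.
split=> [a b ab|a c ca]; apply/negP => sq.
  have [/mapP [a' _ ea] /mapP [b' _ eb] _] := subseq3_mem sq.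
  move: sq ab; rewrite ea eb -[[:: _; _; _]]/(map g [:: a'; b'; a']).
  by rewrite subseq_map_inj // g_mono => sq /no010; rewrite sq.
have [/mapP [a' _ ea] _ /mapP [c' _ ec]] := subseq3_mem sq.
move: sq ca; rewrite ea ec -[[:: _; _; _]]/(map g [:: a'; a'; c']).
by rewrite subseq_map_inj // g_mono => sq /no110; rewrite sq.
Qed.

Lemma forbidden_map w v : forbidden (map g w) (g v) = forbidden w v.
Proof.
rewrite /forbidden (mem_map g_inj) has_map; congr orb; apply: eq_has => a /=.
by rewrite g_mono -[[:: g a; g a]]/(map g [:: a; a]) subseq_map_inj.
Qed.

End Relabel.

Fixpoint words_over (s : seq nat) (n : nat) : seq (seq nat) :=
  if n is n'.+1 then [seq y :: z | y <- s, z <- words_over s n'] else [:: [::]].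

Definition words (k n : nat) : seq (seq nat) := words_over (iota 0 k) n.

Lemma sum_words_over_cons s n (F : seq nat -> nat) :
  \sum_(w <- words_over s n.+1) F w = \sum_(y <- s) \sum_(z <- words_over s n) F (y :: z).
Proof. exact: big_allpairs_dep. Qed.

Lemma mem_words_over s n w :
  w \in words_over s n -> size w = n /\ all (fun v => v \in s) w.
Proof.
elim: n w => [|n IH] w /=; first by rewrite inE => /eqP ->.
case/allpairsPdep => y [z [ys zs ->]]; have [<- zs'] := IH _ zs.
by rewrite /= ys zs'.
Qed.

Lemma mem_words k n w : w \in words k n -> below k w.
Proof.
case/mem_words_over => _ /allP wk; apply/allP => v /wk.
by rewrite mem_iota.
Qed.

Lemma words_over_map (g : nat -> nat) s n :
  words_over (map g s) n = map (map g) (words_over s n).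
Proof.
elim: n => [|n IH] //=.
by rewrite allpairs_mapl IH allpairs_mapr map_allpairs.
Qed.

Lemma words_over_const c r : words_over [:: c] r = [:: nseq r c].
Proof. by elim: r => [|r IH] //=; rewrite IH. Qed.

Lemma sum_tuples k n (P : pred (seq nat)) :
  \sum_(t : n.-tuple 'I_k) P (map val t) = \sum_(w <- words k n) P w.
Proof.
elim: n P => [|n IH] P.
  rewrite (big_pred1 [tuple]) /words ?big_seq1 // => t.
  by symmetry; apply/eqP; exact: tuple0.
pose cons_t (p : 'I_k * n.-tuple 'I_k) : n.+1.-tuple 'I_k := [tuple of p.1 :: p.2].
rewrite (reindex cons_t); last first.
  exists (fun t : n.+1.-tuple 'I_k => (thead t, [tuple of behead t])).
    by case=> y t _; congr pair; apply: val_inj.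
  by move=> t _; rewrite /cons_t /= -tuple_eta.
transitivity (\sum_(y : 'I_k) \sum_(t : n.-tuple 'I_k) P (val y :: map val t)).
  by rewrite pair_bigA; apply: eq_bigr => -[y t] _.
transitivity (\sum_(y : 'I_k) \sum_(w <- words k n) P (val y :: w)).
  by apply: eq_bigr => y _; exact: (IH (fun w => P (val y :: w))).
by rewrite /words sum_words_over_cons -val_enum_ord big_map big_enum.
Qed.

Lemma card_tuples k n (P : pred (seq nat)) :
  #|[set t : n.-tuple 'I_k | P (map val t)]| = \sum_(w <- words k n) P w.
Proof.
rewrite -sum_tuples -sum1_card big_mkcond /=; apply: eq_bigr => t _.
by rewrite inE; case: (P _).
Qed.

Lemma sum_andb (I : Type) (r : seq I) (P Q : pred I) :
  \sum_(i <- r) (P i && Q i) = \sum_(i <- r | P i) Q i.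
Proof. by rewrite [RHS]big_mkcond; apply: eq_bigr => i _; case: (P i). Qed.

Lemma sum_words_over_all s n (P : pred nat) (F : seq nat -> nat) :
  \sum_(z <- words_over s n | all P z) F z = \sum_(z <- words_over (filter P s) n) F z.
Proof.
elim: n F => [|n IH] F; first by rewrite /= !big_cons !big_nil.
rewrite big_mkcond !sum_words_over_cons big_filter [RHS]big_mkcond.
apply: eq_bigr => y _; case Py: (P y); last by rewrite big1 // => z _; rewrite /= Py.
by rewrite -IH [RHS]big_mkcond; apply: eq_bigr => z _; rewrite /= Py.
Qed.

Lemma sum_words_over_first s L (P : pred nat) (F : seq nat -> nat) :
  \sum_(z <- words_over s L | ~~ all P z) F z =
  \sum_(q < L) \sum_(x <- words_over s q | all P x) \sum_(y <- s | ~~ P y)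
     \sum_(z <- words_over s (L - q.+1)) F (x ++ y :: z).
Proof.
elim: L F => [|L IH] F; first by rewrite big_ord0 /= big_cons big_nil.
rewrite big_mkcond sum_words_over_cons big_ord_recl big_cons big_nil /= addn0 subn1 /=.
transitivity (\sum_(y <- s | ~~ P y) \sum_(z <- words_over s L) F (y :: z) +
  \sum_(y <- s | P y) \sum_(z <- words_over s L | ~~ all P z) F (y :: z)).
  rewrite [in RHS]big_mkcond [X in _ + X]big_mkcond -big_split /=.
  apply: eq_bigr => y _; case Py: (P y) => /=; last first.
    by rewrite addn0; apply: eq_bigr => z _.
  by rewrite add0n [RHS]big_mkcond.
congr (_ + _); under eq_bigr => y Py do rewrite IH.
rewrite exchange_big; apply: eq_bigr => q _ /=.
rewrite /bump leq0n add0n add1n subSS.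
rewrite [RHS]big_mkcond big_allpairs_dep [LHS]big_mkcond /=; apply: eq_bigr => y _.
by case Py: (P y) => /=; [rewrite big_mkcond | rewrite big1 // => x _; rewrite Py].
Qed.

Lemma filter_iota_below m k : m <= k -> filter (fun v => v < m) (iota 0 k) = iota 0 m.
Proof.
move=> mk; rewrite -(subnKC mk) iotaD filter_cat add0n.
rewrite (@eq_in_filter _ _ predT); last by move=> v; rewrite mem_iota.
rewrite (@eq_in_filter _ _ pred0 (iota m _)); last first.
  by move=> v; rewrite mem_iota => /andP [/leq_gtF].
by rewrite filter_predT filter_pred0 cats0.
Qed.

Lemma sum_words_below m L (F : seq nat -> nat) :
  \sum_(z <- words m.+1 L | below m z) F z = \sum_(z <- words m L) F z.
Proof. by rewrite sum_words_over_all filter_iota_below. Qed.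

Lemma sum_words_with_max m L (F : seq nat -> nat) :
  \sum_(z <- words m.+1 L | ~~ below m z) F z =
  \sum_(q < L) \sum_(x <- words m q) \sum_(z <- words m.+1 (L - q.+1)) F (x ++ m :: z).
Proof.
have only_m (G : nat -> nat) : \sum_(y <- iota 0 m.+1 | ~~ (y < m)) G y = G m.
  rewrite -addn1 iotaD big_cat /= big_cons big_nil ltnn /= addn0.
  by rewrite big_seq_cond big1 // => y /andP [/[!mem_iota] /andP [_ ->]].
rewrite sum_words_over_first; apply: eq_bigr => q _; rewrite sum_words_below.
by apply: eq_bigr => x _; rewrite only_m.
Qed.

Lemma sum_words_by_max k n (H : seq nat -> nat) : 0 < n ->
  \sum_(w <- words k n) H w =
  \sum_(0 <= m < k) \sum_(0 <= q < n) \sum_(x <- words m q)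
     \sum_(z <- words m.+1 (n - q.+1)) H (x ++ m :: z).
Proof.
case: n => // n _; elim: k => [|k IH]; first by rewrite big_geq // /words /= big_nil.
rewrite big_nat_recr //= -IH (bigID (fun w => below k w)) /= sum_words_below.
by rewrite sum_words_with_max big_mkord.
Qed.

Section RelabelList.
Variables (A : seq nat) (m : nat).
Hypotheses (A_sorted : sorted ltn A) (Am : below m A).

Definition relabel (j : nat) : nat := if j < size A then nth 0 A j else m + j.

Lemma relabel_incr : {homo relabel : x y / x < y}.
Proof.
move=> x y xy; rewrite /relabel; case: ifP => xA; case: ifP => yA.
- exact: (sorted_ltn_nth ltn_trans 0 A_sorted).
- by apply: leq_trans (leq_addr y m); apply: (allP Am); rewrite mem_nth.
- by move: (ltn_trans xy yA); rewrite xA.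
- by rewrite ltn_add2l.
Qed.

Lemma relabel_iota : map relabel (iota 0 (size A)) = A.
Proof.
rewrite -[RHS](mkseq_nth 0) /mkseq; apply/eq_in_map => j.
by rewrite mem_iota /relabel => /andP [_ ->].
Qed.

Lemma sum_words_relabel L (Phi : seq nat -> nat) :
  \sum_(z <- words_over A L) Phi z = \sum_(z <- words (size A) L) Phi (map relabel z).
Proof. by rewrite -{1}relabel_iota words_over_map big_map. Qed.

Lemma count_forbidden_relabel z : av z -> below (size A) z ->
  count (forbidden (map relabel z)) A = nforb z.
Proof.
move=> z_av zA; rewrite -{1}relabel_iota count_map (forbE z_av zA).
by apply: eq_count => v /=; rewrite forbidden_map //; exact: relabel_incr.
Qed.

End RelabelList.

Lemma sum_words_const m r : \sum_(z <- words m.+1 r) all (pred1 m) z = 1.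
Proof.
rewrite (eq_bigr (fun z => nat_of_bool (all (pred1 m) z && true))) => [|z _]; last by rewrite andbT.
rewrite sum_andb sum_words_over_all.
rewrite filter_pred1_uniq ?iota_uniq ?words_over_const ?big_seq1 //.
by rewrite mem_iota add0n ltnSn.
Qed.

Lemma eq_forb_succ a b f : (a + b + 1 == f) = (a < f) && (b == f - a - 1).
Proof. by apply/eqP/andP => [<-|[af /eqP ->]]; [split; [lia | apply/eqP; lia] | lia]. Qed.

Definition jsum (n k f : nat) : nat := \sum_(w <- words k n) (av w && (nforb w == f)).
Definition ksum (n k : nat) : nat := \sum_(w <- words k n) av w.

Lemma jj_jsum n k f : jj n k f = jsum n k f.
Proof. exact: (card_tuples k n (fun w => av w && (nforb w == f))). Qed.

Lemma kk_ksum n k : kk n k = ksum n k.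
Proof. exact: (card_tuples k n (fun w => av w)). Qed.

Section Extensions.
Variables (m : nat) (x : seq nat).
Hypotheses (xm : below m x) (x_av : av x).

Local Notation g := (relabel (allowed x m) m).

Lemma allowed_sorted : sorted ltn (allowed x m).
Proof. exact: (sorted_filter ltn_trans _ (iota_ltn_sorted 0 m)). Qed.

Lemma allowed_below : below m (allowed x m).
Proof. by apply/allP => v; rewrite mem_filter mem_iota => /andP [_ /andP [_]]. Qed.

Lemma size_allowed : size (allowed x m) = m - nforb x.
Proof.
rewrite size_filter (forbE x_av xm) -[X in _ = X - _](size_iota 0 m).
by rewrite -(count_predC (forbidden x)) addKn.
Qed.

Lemma sum_allowed_words L (Phi : seq nat -> nat) :
  \sum_(z <- words m L | all (fun v => ~~ forbidden x v) z) Phi z =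
  \sum_(z <- words (m - nforb x) L) Phi (map g z).
Proof. by rewrite sum_words_over_all (sum_words_relabel _ m) size_allowed. Qed.

Lemma av_relabel z : av (map g z) = av z.
Proof. exact/av_map/relabel_incr/allowed_below/allowed_sorted. Qed.

(* Suffixes below [m]: forb w = forb x + 1 + forb z, whence the j-term. *)
Lemma count_below_max L f :
  \sum_(z <- words m L) (av (x ++ m :: z) && (nforb (x ++ m :: z) == f)) =
  (nforb x < f) * jsum L (m - nforb x) (f - nforb x - 1).
Proof.
have split_av z : z \in words m L ->
    (av (x ++ m :: z) && (nforb (x ++ m :: z) == f)) =
    all (fun v => ~~ forbidden x v) z &&
      (av z && (nforb x + count (forbidden z) (allowed x m) + 1 == f)).
  move=> /mem_words zm; have := forb_cat_max xm zm.
  rewrite (av_cat_max xm zm) x_av.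
  by case: (av z); case: (all _ z) => // /(_ isT) ->.
under eq_big_seq => z /split_av -> do [].
rewrite sum_andb sum_allowed_words /jsum big_distrr.
apply: eq_big_seq => z /mem_words zA; rewrite av_relabel.
case z_av: (av z); last by case: (_ < f).
rewrite count_forbidden_relabel ?allowed_below ?allowed_sorted ?size_allowed //.
by rewrite /= eq_forb_succ; case: (nforb x < f); rewrite ?mul1n ?mul0n.
Qed.

Lemma count_repeat_max z1 r f : below m z1 ->
  \sum_(z2 <- words m.+1 r)
     (av (x ++ m :: z1 ++ m :: z2) && (nforb (x ++ m :: z1 ++ m :: z2) == f)) =
  (all (fun v => ~~ forbidden x v) z1 && av z1) * (f == m.+1).
Proof.
move=> z1m; set u := x ++ m :: z1.
have um : below m.+1 u := below_cat_max xm z1m.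
have mu : m \in u by rewrite mem_cat mem_head orbT.
have split_av z2 : z2 \in words m.+1 r ->
    (av (x ++ m :: z1 ++ m :: z2) && (nforb (x ++ m :: z1 ++ m :: z2) == f)) =
    (all (fun v => ~~ forbidden x v) z1 && av z1) * (f == m.+1) * all (pred1 m) z2 :> nat.
  move=> /mem_words z2m; rewrite -cat_cons catA -/u.
  have av_w : av (u ++ m :: z2) =
      (all (fun v => ~~ forbidden x v) z1 && av z1) && all (pred1 m) z2.
    by rewrite (av_max_tail um mu z2m) (av_cat_max xm z1m) x_av /= [av z1 && _]andbC.
  case w_av: (av (u ++ m :: z2)); have := w_av; rewrite av_w; last first.
    by case: (all _ z1 && av z1); case: (all _ z2); rewrite ?muln0 ?mul0n.
  case/andP => -> ->; rewrite (@forb_square_max m) ?muln1 ?mul1n 1?eq_sym //.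
    by rewrite all_cat um /= ltnSn.
  by apply: (@cat_subseq _ [:: m] [:: m]); rewrite ?sub1seq ?mem_head.
under eq_big_seq => z2 /split_av -> do [].
by rewrite -big_distrr /= sum_words_const muln1.
Qed.

Lemma count_with_max L f :
  \sum_(z <- words m.+1 L | ~~ below m z)
     (av (x ++ m :: z) && (nforb (x ++ m :: z) == f)) =
  delta f m.+1 * \sum_(0 <= l < L) ksum l (m - nforb x).
Proof.
rewrite sum_words_with_max big_mkord big_distrr; apply: eq_bigr => l _ /=.
under eq_big_seq => z1 /mem_words z1m do rewrite count_repeat_max //.
rewrite -big_distrl sum_andb sum_allowed_words /ksum mulnC /delta eq_sym.
by congr (_ * _); apply: eq_bigr => z _; rewrite av_relabel.
Qed.

End Extensions.

Lemma count_extensions m x L f : below m x ->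
  \sum_(z <- words m.+1 L) (av (x ++ m :: z) && (nforb (x ++ m :: z) == f)) =
  (av x && (nforb x < f)) * (jsum L (m - nforb x) (f - nforb x - 1)
     + delta f m.+1 * \sum_(0 <= l < L) ksum l (m - nforb x)).
Proof.
move=> xm; have [x_av|x_nav] := boolP (av x); last first.
  by rewrite big1 // => z _; rewrite (negbTE (contra (@av_catl x _) x_nav)).
rewrite (bigID (fun z => below m z)) /= sum_words_below.
rewrite (count_below_max xm x_av) (count_with_max xm x_av).
have := forb_le x_av xm; case: (ltnP (nforb x) f) => fx xm_le; first by rewrite !mul1n.
by rewrite !mul0n /delta; case: eqP => [fm|_]; [move: fx; rewrite fm; lia | rewrite mul0n].
Qed.

Lemma sum_by_forb m q f (G : nat -> nat) :
  \sum_(x <- words m q) (av x && (nforb x < f)) * G (nforb x) =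
  \sum_(0 <= i < f) jsum q m i * G i.
Proof.
transitivity (\sum_(x <- words m q) \sum_(0 <= i < f) (av x && (nforb x == i)) * G i).
  apply: eq_bigr => x _; case: (av x); last by rewrite mul0n big1.
  rewrite (eq_bigr (fun i => if i == nforb x then G i else 0)) => [|i _].
    by rewrite -big_mkcond big_nat1_eq /=; case: (_ < f); rewrite ?mul1n.
  by rewrite eq_sym; case: eqP; rewrite ?mul1n.
by rewrite exchange_big; apply: eq_bigr => i _; rewrite /jsum big_distrl.
Qed.

Unset Implicit Arguments.

Theorem mainTheorem12 (n k f : nat) (hn : 1 <= n) :
  jj n k f =
  \sum_(1 <= p < n.+1) \sum_(0 <= i < f) \sum_(0 <= m < k)
     jj p.-1 m i *
       (jj (n - p) (m - i) (f - i - 1)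
        + delta f m.+1 * \sum_(0 <= l < n - p) kk l (m - i)).
Proof.
rewrite jj_jsum /jsum (sum_words_by_max _ _ hn).
transitivity (\sum_(0 <= m < k) \sum_(0 <= q < n) \sum_(0 <= i < f)
   jsum q m i * (jsum (n - q.+1) (m - i) (f - i - 1)
     + delta f m.+1 * \sum_(0 <= l < n - q.+1) ksum l (m - i))).
  apply: eq_bigr => m _; apply: eq_bigr => q _; rewrite -sum_by_forb.
  by apply: eq_big_seq => x /mem_words xm; rewrite count_extensions.
rewrite big_add1 /= exchange_big; apply: eq_bigr => q _.
rewrite exchange_big; apply: eq_bigr => i _; apply: eq_bigr => m _.
rewrite !jj_jsum; congr (_ * (_ + _ * _)).
by apply: eq_bigr => l _; rewrite kk_ksum.
Qed.
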